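(* Let $F$ be a field and let $A$ be a unital alternative $F$-algebra. If $A$ is finite-dimensional or reversible, then $A$ is von-Neumann finite.
   Context: An $F$-algebra is a vector space $A$ over $F$ with a bilinear multiplication $A\times A\to A$, not necessarily associative; unital means there is $1\in A$ with $1a=a1=a$ for all $a$. $A$ is alternative if $a^2b=a(ab)$ and $ab^2=(ab)b$ for all $a,b\in A$. $A$ is von-Neumann finite if for all $a,b\in A$, $ab=1$ implies $ba=1$. $A$ is reversible if for all $a,b\in A$, $ab=0$ implies $ba=0$. *)

From HB Require Import structures.
From mathcomp Require Import all_boot all_algebra.
Set Implicit Arguments. Unset Strict Implicit. Unset Printing Implicit Defensive.
Import GRing.Theory.
Local Open Scope ring_scope.

Definition bilinear_mul (F : fieldType) (A : lmodType F) (mul : A -> A -> A) :=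
  (forall (k : F) (x y z : A), mul (k *: x + y) z = k *: mul x z + mul y z) /\
  (forall (k : F) (x y z : A), mul x (k *: y + z) = k *: mul x y + mul x z).

Definition unital_with (A : Type) (mul : A -> A -> A) (one : A) :=
  forall a, mul one a = a /\ mul a one = a.

Definition alternative (A : Type) (mul : A -> A -> A) :=
  forall a b, mul (mul a a) b = mul a (mul a b) /\ mul a (mul b b) = mul (mul a b) b.

Definition vN_finite (A : Type) (mul : A -> A -> A) (one : A) :=
  forall a b, mul a b = one -> mul b a = one.

Definition reversible (F : fieldType) (A : lmodType F) (mul : A -> A -> A) :=
  forall a b, mul a b = 0 -> mul b a = 0.

Definition finite_dim (F : fieldType) (A : lmodType F) :=
  exists s : seq A, forall v : A,
    exists c : 'I_(size s) -> F, v = \sum_(i < size s) c i *: s`_i.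

From mathcomp Require Import all_boot all_algebra.
Set Implicit Arguments. Unset Strict Implicit. Unset Printing Implicit Defensive.
Import GRing.Theory.
Local Open Scope ring_scope.

(* The associator (x, y, z) of an alternative algebra is alternating, and the
   Teichmueller identity shows that the y with (y, a, _) = 0 form a subspace
   containing 1 and closed under right multiplication by a.  When ab = 1, such
   a y satisfies y = (ya)b, so right multiplication by a is injective there.
   In finite dimension the right powers of a satisfy a nontrivial linear
   relation; cancelling its lowest terms yields g with ga = 1 and (g, a, b) = 0,
   whence g = (ga)b = b.  In the reversible case flexibility gives
   a(1 - ba) = 0, hence (1 - ba)a = 0, and since (ba, a, b) = 0 the same
   cancellation gives 1 - ba = 0. *)

Lemma spanned_dependent (F : fieldType) (A : lmodType F) (s : seq A)
    n (w : 'I_n -> A) :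
  (forall v, exists c : 'I_(size s) -> F, v = \sum_(j < size s) c j *: s`_j) ->
  (size s < n)%N ->
  exists2 c : 'I_n -> F, (exists i, c i != 0) & \sum_i c i *: w i = 0.
Proof.
move=> span lt_s_n; have [C defw] := fin_all_exists (fun i => span (w i)).
pose M : 'M[F]_(n, size s) := \matrix_(i, j) C i j.
pose u := nz_row (kermx M).
have u_neq0 : u != 0.
  rewrite nz_row_eq0 kermx_eq0; apply: contraTN lt_s_n => /eqP <-.
  by rewrite -leqNgt rank_leq_col.
have uM : u *m M = 0 by apply/sub_kermxP; apply: nz_row_sub.
exists (u 0).
  have /existsP[i ui] : [exists i, u 0 i != 0].
    apply: contraNT u_neq0 => /existsPn u0; apply/eqP/rowP => i.
    by rewrite mxE; apply/eqP; rewrite -[_ == _]negbK u0.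
  by exists i.
under eq_bigr => i _ do rewrite defw scaler_sumr.
rewrite exchange_big /=; apply: big1 => j _.
have -> : \sum_i u 0 i *: (C i j *: s`_j) = (u *m M) 0 j *: s`_j.
  by rewrite mxE scaler_suml; apply: eq_bigr => i _; rewrite scalerA mxE.
by rewrite uM mxE scale0r.
Qed.

Section AlternativeAlgebra.
Variables (F : fieldType) (A : lmodType F) (mul : A -> A -> A) (one : A).
Hypotheses (mul_bilinear : bilinear_mul mul) (mul_unital : unital_with mul one)
  (mul_alternative : alternative mul).

Local Notation "x • y" := (mul x y) (at level 40, left associativity).

Lemma mul1a x : one • x = x. Proof. exact: (mul_unital x).1. Qed.
Lemma mula1 x : x • one = x. Proof. exact: (mul_unital x).2. Qed.

Lemma mulDl x y z : (x + y) • z = x • z + y • z.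
Proof. by have := mul_bilinear.1 1 x y z; rewrite !scale1r. Qed.
Lemma mulDr x y z : x • (y + z) = x • y + x • z.
Proof. by have := mul_bilinear.2 1 x y z; rewrite !scale1r. Qed.
Lemma mul0a z : 0 • z = 0.
Proof. by apply: (addrI (0 • z)); rewrite -mulDl !addr0. Qed.
Lemma mula0 z : z • 0 = 0.
Proof. by apply: (addrI (z • 0)); rewrite -mulDr !addr0. Qed.
Lemma mulZl k x z : (k *: x) • z = k *: (x • z).
Proof. by have := mul_bilinear.1 k x 0 z; rewrite !addr0 mul0a addr0. Qed.
Lemma mulZr k x z : x • (k *: z) = k *: (x • z).
Proof. by have := mul_bilinear.2 k x z 0; rewrite !addr0 mula0 addr0. Qed.
Lemma mulNl x z : (- x) • z = - (x • z).
Proof. by rewrite -scaleN1r mulZl scaleN1r. Qed.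
Lemma mulNr x z : x • (- z) = - (x • z).
Proof. by rewrite -scaleN1r mulZr scaleN1r. Qed.
Lemma mulBl x y z : (x - y) • z = x • z - y • z.
Proof. by rewrite mulDl mulNl. Qed.
Lemma mulBr x y z : x • (y - z) = x • y - x • z.
Proof. by rewrite mulDr mulNr. Qed.

Lemma mul_suml n (f : 'I_n -> A) z : (\sum_i f i) • z = \sum_i f i • z.
Proof. exact: (big_morph (mul^~ z) (fun x y => mulDl x y z) (mul0a z)). Qed.

Definition assoc x y z := x • y • z - x • (y • z).

Lemma assocDl x x' y z : assoc (x + x') y z = assoc x y z + assoc x' y z.
Proof. by rewrite /assoc !mulDl opprD addrACA. Qed.
Lemma assocDm x y y' z : assoc x (y + y') z = assoc x y z + assoc x y' z.
Proof. by rewrite /assoc !(mulDl, mulDr) opprD addrACA. Qed.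
Lemma assocDr x y z z' : assoc x y (z + z') = assoc x y z + assoc x y z'.
Proof. by rewrite /assoc !mulDr opprD addrACA. Qed.
Lemma assocZl k x y z : assoc (k *: x) y z = k *: assoc x y z.
Proof. by rewrite /assoc !mulZl scalerBr. Qed.
Lemma assocBl x x' y z : assoc (x - x') y z = assoc x y z - assoc x' y z.
Proof. by rewrite assocDl -scaleN1r assocZl scaleN1r. Qed.
Lemma assoc0l y z : assoc 0 y z = 0.
Proof. by rewrite /assoc !mul0a subrr. Qed.
Lemma assoc1l y z : assoc one y z = 0.
Proof. by rewrite /assoc !mul1a subrr. Qed.
Lemma assoc1r x y : assoc x y one = 0.
Proof. by rewrite /assoc !mula1 subrr. Qed.

Lemma assoc_left_alt x z : assoc x x z = 0.
Proof. by rewrite /assoc (mul_alternative x z).1 subrr. Qed.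
Lemma assoc_right_alt x z : assoc x z z = 0.
Proof. by rewrite /assoc (mul_alternative x z).2 subrr. Qed.

Lemma assoc_swapr x y z : assoc x z y = - assoc x y z.
Proof.
have := assoc_right_alt x (y + z).
rewrite !assocDr !assocDm !assoc_right_alt add0r addr0 => /eqP.
by rewrite addr_eq0 => /eqP.
Qed.
Lemma assoc_flexible x y : assoc x y x = 0.
Proof. by rewrite assoc_swapr assoc_left_alt oppr0. Qed.

Lemma teichmuller w x y z :
  assoc (w • x) y z - assoc w (x • y) z + assoc w x (y • z) =
  w • assoc x y z + assoc w x y • z.
Proof.
rewrite /assoc mulBr mulBl.
set p := w • x • y • z; set r := w • (x • y) • z; set s := w • (x • y • z).
by rewrite opprB -addrA (addrC (s - r)) addrA subrKA addrACA [RHS]addrACA (addrC p).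
Qed.

Definition left_assoc_free a y := forall z, assoc y a z = 0.

Lemma left_assoc_free1 a : left_assoc_free a one.
Proof. exact: assoc1l. Qed.

Lemma left_assoc_freeM a y : left_assoc_free a y -> left_assoc_free a (y • a).
Proof.
move=> ya0 z; have := teichmuller y a z a.
rewrite (assoc_swapr y) !ya0 assoc_flexible mula0 mul0a oppr0 subr0 !addr0 => yza0.
by rewrite assoc_swapr yza0 oppr0.
Qed.

Lemma left_assoc_free_sum a n (c : 'I_n -> F) (w : 'I_n -> A) :
  (forall i, left_assoc_free a (w i)) -> left_assoc_free a (\sum_i c i *: w i).
Proof.
move=> wfree z; apply: (big_ind (fun y => assoc y a z = 0)).
- exact: assoc0l.
- by move=> x y x0 y0; rewrite assocDl x0 y0 addr0.
- by move=> i _; rewrite assocZl wfree scaler0.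
Qed.

Definition rpow a i := iter i (fun y => y • a) one.

Lemma left_assoc_free_rpow a i : left_assoc_free a (rpow a i).
Proof. by elim: i => [|i]; [apply: left_assoc_free1 | apply: left_assoc_freeM]. Qed.

Lemma rinv_cancel a b y : a • b = one -> assoc y a b = 0 -> y • a • b = y.
Proof. by move=> ab /subr0_eq ->; rewrite ab mula1. Qed.

Lemma assoc_rinv_eq0 a b : a • b = one -> assoc (b • a) a b = 0.
Proof.
move=> ab; have := teichmuller b a a b.
by rewrite assoc_flexible ab assoc1r assoc_left_alt assoc_right_alt mula0 mul0a subr0 !addr0.
Qed.

Lemma reversible_vN_finite : reversible mul -> vN_finite mul one.
Proof.
move=> rev a b ab.
have aba : a • (b • a) = a by have /subr0_eq <- := assoc_flexible a b; rewrite ab mul1a.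
have ya0 : (one - b • a) • a = 0 by apply: rev; rewrite mulBr mula1 aba subrr.
have yab0 : assoc (one - b • a) a b = 0 by rewrite assocBl assoc1l assoc_rinv_eq0 // subrr.
have : one - b • a = 0 by rewrite -(rinv_cancel ab yab0) ya0 mul0a.
by move/subr0_eq ->.
Qed.

Lemma rpow_relation_left_inverse a b n (c : 'I_n -> F) :
    a • b = one -> (exists i, c i != 0) -> \sum_i c i *: rpow a i = 0 ->
  exists2 g, left_assoc_free a g & g • a = one.
Proof.
move=> ab; elim: n c => [|n IH] c [i ci]; first by move: ci; case: i.
rewrite big_ord_recl.
set y := \sum_(j < n) c (lift ord0 j) *: rpow a j.
have -> : \sum_(j < n) c (lift ord0 j) *: rpow a (lift ord0 j) = y • a.
  by rewrite mul_suml; apply: eq_bigr => j _; rewrite mulZl.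
have yfree : left_assoc_free a y.
  by apply: left_assoc_free_sum => j; apply: left_assoc_free_rpow.
have [c0|c0] := eqVneq (c ord0) 0.
  rewrite c0 scale0r add0r => ya0.
  have y0 : y = 0 by rewrite -(rinv_cancel ab (yfree b)) ya0 mul0a.
  apply: IH y0; move: ci; case: (unliftP ord0 i) => [j ->|->]; first by exists j.
  by rewrite c0 eqxx.
move=> rel; exists (- (c ord0)^-1 *: y); first by move=> z; rewrite assocZl yfree scaler0.
rewrite mulZl (_ : y • a = - (c ord0 *: one)); last by apply/eqP; rewrite -addr_eq0 addrC rel.
by rewrite scalerN scaleNr opprK scalerA mulVf // scale1r.
Qed.

Lemma finite_dim_vN_finite : finite_dim A -> vN_finite mul one.
Proof.
move=> [s span] a b ab.
have [c nz rel] := spanned_dependent (rpow a) span (ltnSn (size s)).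
have [g gfree ga1] := rpow_relation_left_inverse ab nz rel.
have <- : g = b by rewrite -(rinv_cancel ab (gfree b)) ga1 mul1a.
exact: ga1.
Qed.

End AlternativeAlgebra.

Theorem proposition4p1 (F : fieldType) (A : lmodType F)
  (mul : A -> A -> A) (one : A) :
  bilinear_mul mul -> unital_with mul one -> alternative mul ->
  (finite_dim A \/ reversible mul) ->
  vN_finite mul one.
Proof.
move=> bil unit alt [fd|rev].
- exact: finite_dim_vN_finite.
- exact: reversible_vN_finite.
Qed.
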